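(* Let $h$ and $k$ be relatively prime integers with $k>0$ and $h+k$ odd. Then $$B_{1}(h,k)=\frac{2(1-h)}{\pi}\sum_{n=1}^{\infty}\frac{1}{2n-1}\tan\left(\frac{\pi h(2n-1)}{2k}\right).$$
   Context: $[x]$ denotes the greatest integer $\le x$. For integers $h,k$ with $k>0$ and $\gcd(h,k)=1$, $$B_{1}(h,k)=\sum_{j=1}^{k-1}(-1)^{j+\left[\frac{hj}{k}\right]}\left[\frac{hj}{k}\right].$$ *)

From Stdlib Require Import Reals ZArith List.
From Coquelicot Require Import Coquelicot.
Open Scope Z_scope.

Definition sgnpow (e : Z) : Z := if Z.even e then 1 else -1.

(* B_1(h,k) = sum_{j=1}^{k-1} (-1)^{j + [hj/k]} [hj/k];  Z.div is floor division for k > 0. *)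
Definition B1hk (h k : Z) : Z :=
  fold_right Z.add 0
    (map (fun j : nat =>
            let q := (h * Z.of_nat j) / k in sgnpow (Z.of_nat j + q) * q)
         (seq 1 (Z.to_nat k - 1))).

(* n-th term (n >= 0, i.e. index n+1 of the paper):
   tan(pi h (2n+1) / (2k)) / (2n+1). *)
Definition B1_term (h k : Z) (n : nat) : R :=
  (tan (PI * IZR h * (2 * INR n + 1) / (2 * IZR k)) / (2 * INR n + 1))%R.

From Stdlib Require Import Reals ZArith List Lra Lia.
From Coquelicot Require Import Coquelicot.

(* For [θ = π h (2n+1) / (2k)] one has [cos θ <> 0] and [(2k - 1) θ = h (2n+1) π - θ];
   since [h + k] is odd, the telescoping identity for [2 cos θ Σ (-1)^(j+1) sin (2 j θ)]
   turns [tan θ] into the finite sum [Σ_{j=1}^{k-1} (-1)^(j+1) sin (2 j θ)].  Dividing by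
   [2n+1] and summing over [n], each [j] contributes the square wave
   [Σ_n sin ((2n+1) x) / (2n+1)] at [x = π h j / k], which equals [±π/4] with the sign
   [(-1)^[hj/k]] because [k] does not divide [hj].  The reflection [j -> k - j] sends
   [[hj/k]] to [h - 1 - [hj/k]] and preserves [(-1)^(j + [hj/k])], which relates the
   resulting sum of signs to [B_1(h,k)].  The square wave itself is reduced to Leibniz's
   series at [x = π/2]: a corrected partial sum has derivative [O(1/N)], so the mean value
   theorem bounds its variation between [x] and [π/2]. *)

Open Scope R_scope.

(** * The square wave *)

Definition odd_harmonic (x : R) (n : nat) : R :=
  sin ((2 * INR n + 1) * x) / (2 * INR n + 1).

Lemma sin_odd_mult_PI2 n : sin ((2 * INR n + 1) * (PI / 2)) = (-1) ^ n.
Proof.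
induction n as [|n IH].
- rewrite Rmult_0_r, Rplus_0_l, Rmult_1_l, sin_PI2; ring.
- rewrite S_INR.
  replace ((2 * (INR n + 1) + 1) * (PI / 2)) with ((2 * INR n + 1) * (PI / 2) + PI) by field.
  rewrite neg_sin, IH; simpl; ring.
Qed.

(* At [PI/2] the series is Leibniz's series for [PI/4]. *)
Lemma is_lim_seq_odd_harmonic_PI2 : is_lim_seq (sum_n (odd_harmonic (PI / 2))) (PI / 4).
Proof.
apply is_lim_seq_Reals.
assert (Hsum : forall N, sum_n (odd_harmonic (PI / 2)) N = sum_f_R0 (tg_alt PI_tg) N).
{ intro N. rewrite sum_n_Reals. apply sum_eq. intros i _.
  unfold odd_harmonic, tg_alt, PI_tg. rewrite sin_odd_mult_PI2, plus_INR, mult_INR.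
  simpl. field. pose proof (pos_INR i). lra. }
intros eps Heps.
destruct exist_PI as [l Hl] eqn:E.
assert (Hl4 : l = PI / 4).
{ rewrite <- Alt_PI_eq. unfold Alt_PI. rewrite E. field. }
subst l. destruct (Hl eps Heps) as [N HN]. exists N. intros n Hn.
rewrite Hsum. exact (HN n Hn).
Qed.

Lemma sum_cos_odd_mult N t :
  2 * sin t * sum_n (fun n => cos ((2 * INR n + 1) * t)) N = sin (2 * (INR N + 1) * t).
Proof.
induction N as [|N IH].
- rewrite sum_O, Rmult_0_r, Rplus_0_l, Rmult_1_l, Rplus_0_l, Rmult_1_r, sin_2a. ring.
- rewrite sum_Sn. change (plus ?a ?b) with (a + b).
  rewrite Rmult_plus_distr_l, IH, S_INR.
  replace (2 * (INR N + 1 + 1) * t) with ((2 * (INR N + 1) + 1) * t + t) by ring.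
  replace (2 * (INR N + 1) * t) with ((2 * (INR N + 1) + 1) * t - t) by ring.
  rewrite sin_plus, sin_minus. ring.
Qed.

Lemma is_derive_sum_odd_harmonic N t :
  is_derive (fun s => sum_n (odd_harmonic s) N) t
            (sum_n (fun n => cos ((2 * INR n + 1) * t)) N).
Proof.
induction N as [|N IH].
- apply is_derive_ext with (f := fun s => odd_harmonic s 0%nat).
  { intro s. now rewrite sum_O. }
  rewrite sum_O. unfold odd_harmonic. auto_derive; auto. simpl. field.
- apply is_derive_ext with (f := fun s => plus (sum_n (odd_harmonic s) N) (odd_harmonic s (S N))).
  { intro s. now rewrite sum_Sn. }
  rewrite sum_Sn. apply (is_derive_plus (fun s => sum_n (odd_harmonic s) N)); [exact IH|].
  unfold odd_harmonic. assert (Hc : 0 < 2 * INR (S N) + 1) by (pose proof (pos_INR (S N)); lra).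
  revert Hc; generalize (2 * INR (S N) + 1); intros c Hc.
  auto_derive; [auto | field; lra].
Qed.

(* Adding this boundary term cancels the oscillating part of the derivative of the
   partial sum, leaving a derivative of size [O(1/N)] away from the zeros of [sin]. *)
Definition corrected_sum (N : nat) (t : R) : R :=
  sum_n (odd_harmonic t) N + cos (2 * (INR N + 1) * t) / (4 * (INR N + 1) * sin t).

Lemma is_derive_corrected_sum N t : sin t <> 0 ->
  is_derive (corrected_sum N) t
    (- cos (2 * (INR N + 1) * t) * cos t / (4 * (INR N + 1) * (sin t) ^ 2)).
Proof.
intro Hs. unfold corrected_sum.
pose proof (sum_cos_odd_mult N t) as Hc.
replace (4 * (INR N + 1)) with (2 * (2 * (INR N + 1))) by ring.
assert (HM : 0 < 2 * (INR N + 1)) by (pose proof (pos_INR N); lra).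
generalize dependent (2 * (INR N + 1)). intros M Hc HM.
assert (Hd : is_derive (fun s => cos (M * s) / (2 * M * sin s)) t
   ((- M * sin (M * t) * (2 * M * sin t) - cos (M * t) * (2 * M * cos t)) / (2 * M * sin t) ^ 2)).
{ auto_derive. { intro H0. apply Rmult_integral in H0 as [H0|H0]; lra. } field. lra. }
assert (E : sum_n (fun n => cos ((2 * INR n + 1) * t)) N = sin (M * t) / (2 * sin t)).
{ apply (Rmult_eq_reg_l (2 * sin t)); [rewrite Hc; field; exact Hs | lra]. }
replace (- cos (M * t) * cos t / (2 * M * sin t ^ 2)) with
  (plus (sum_n (fun n => cos ((2 * INR n + 1) * t)) N)
        ((- M * sin (M * t) * (2 * M * sin t) - cos (M * t) * (2 * M * cos t)) / (2 * M * sin t) ^ 2)).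
- exact (is_derive_plus _ _ _ _ _ (is_derive_sum_odd_harmonic N t) Hd).
- change (plus ?a ?b) with (a + b). rewrite E. change (?a = ?b) with (@eq R a b). field. lra.
Qed.

Lemma sin_le_of_closer_PI2 x t : 0 < x < PI -> Rabs (t - PI / 2) <= Rabs (x - PI / 2) ->
  sin x <= sin t.
Proof.
intros Hx Ht. pose proof PI_RGT_0.
assert (Hcos : forall u, sin u = cos (Rabs (u - PI / 2))).
{ intro u. rewrite <- cos_shift. replace (PI / 2 - u) with (- (u - PI / 2)) by ring.
  rewrite cos_neg. unfold Rabs. destruct (Rcase_abs (u - PI / 2)); [rewrite cos_neg|]; reflexivity. }
rewrite !Hcos. destruct (Req_dec (Rabs (t - PI / 2)) (Rabs (x - PI / 2))) as [->|Hne]; [lra|].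
assert (Hxb : Rabs (x - PI / 2) <= PI) by (apply Rabs_le; lra).
left. apply cos_decreasing_1; try apply Rabs_pos; lra.
Qed.

Lemma corrected_sum_dist_PI2 N x : 0 < x < PI ->
  Rabs (corrected_sum N x - corrected_sum N (PI / 2))
  <= / (4 * (INR N + 1) * sin x ^ 2) * Rabs (x - PI / 2).
Proof.
intros Hx. pose proof (sin_gt_0 x (proj1 Hx) (proj2 Hx)) as Hsx.
assert (HK : 0 < 4 * (INR N + 1)) by (pose proof (pos_INR N); lra).
apply (bounded_variation (corrected_sum N)
  (fun t => - cos (2 * (INR N + 1) * t) * cos t / (4 * (INR N + 1) * sin t ^ 2))).
intros t Ht.
pose proof (sin_le_of_closer_PI2 x t Hx Ht) as Hst.
split; [apply is_derive_corrected_sum; lra|].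
assert (Hnum : Rabs (- cos (2 * (INR N + 1) * t) * cos t) <= 1).
{ rewrite Rabs_mult, Rabs_Ropp, <- (Rmult_1_l 1).
  apply Rmult_le_compat; try apply Rabs_pos; apply Rabs_le, COS_bound. }
assert (Hden : 0 < 4 * (INR N + 1) * sin t ^ 2)
  by (apply Rmult_lt_0_compat; [lra | apply pow_lt; lra]).
unfold Rdiv. rewrite Rabs_mult, (Rabs_pos_eq (/ _)) by (left; apply Rinv_0_lt_compat; exact Hden).
apply Rle_trans with (1 * / (4 * (INR N + 1) * sin t ^ 2)).
{ apply Rmult_le_compat_r; [left; apply Rinv_0_lt_compat|]; assumption. }
rewrite Rmult_1_l. apply Rinv_le_contravar.
- apply Rmult_lt_0_compat; [lra | apply pow_lt; lra].
- apply Rmult_le_compat_l; [lra|]. apply pow_incr; lra.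
Qed.

Lemma sum_odd_harmonic_dist_PI2 N x : 0 < x < PI ->
  Rabs (sum_n (odd_harmonic x) N - sum_n (odd_harmonic (PI / 2)) N)
  <= (Rabs (x - PI / 2) / sin x ^ 2 + / sin x + 1) / (4 * (INR N + 1)).
Proof.
intros Hx. pose proof (sin_gt_0 x (proj1 Hx) (proj2 Hx)) as Hsx.
pose proof (corrected_sum_dist_PI2 N x Hx) as HT.
unfold corrected_sum in HT. rewrite sin_PI2, Rmult_1_r in HT.
assert (HK : 0 < 4 * (INR N + 1)) by (pose proof (pos_INR N); lra).
set (K := 4 * (INR N + 1)) in *.
set (c1 := cos (2 * (INR N + 1) * x)) in *. set (c2 := cos (2 * (INR N + 1) * (PI / 2))) in *.
assert (B1 : Rabs (c1 / (K * sin x)) <= / (K * sin x)).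
{ unfold Rdiv. rewrite Rabs_mult, (Rabs_pos_eq (/ _)) by (left; apply Rinv_0_lt_compat; nra).
  rewrite <- (Rmult_1_l (/ (K * sin x))) at 2.
  apply Rmult_le_compat_r; [left; apply Rinv_0_lt_compat; nra | apply Rabs_le, COS_bound]. }
assert (B2 : Rabs (c2 / K) <= / K).
{ unfold Rdiv. rewrite Rabs_mult, (Rabs_pos_eq (/ _)) by (left; apply Rinv_0_lt_compat; lra).
  rewrite <- (Rmult_1_l (/ K)) at 2.
  apply Rmult_le_compat_r; [left; apply Rinv_0_lt_compat; lra | apply Rabs_le, COS_bound]. }
match goal with |- Rabs (?S1 - ?S2) <= _ =>
  replace (S1 - S2) with ((S1 + c1 / (K * sin x) - (S2 + c2 / K)) - c1 / (K * sin x) + c2 / K)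
    by (field; lra) end.
eapply Rle_trans; [apply Rabs_triang|].
eapply Rle_trans; [apply Rplus_le_compat_r, Rabs_triang|].
rewrite Rabs_Ropp.
eapply Rle_trans;
  [apply Rplus_le_compat; [apply Rplus_le_compat; [exact HT | exact B1] | exact B2]|].
right. field. lra.
Qed.

Lemma is_series_odd_harmonic x : 0 < x < PI -> is_series (odd_harmonic x) (PI / 4).
Proof.
intros Hx. pose proof (sin_gt_0 x (proj1 Hx) (proj2 Hx)) as Hsx.
set (C := (Rabs (x - PI / 2) / sin x ^ 2 + / sin x + 1) / 4).
assert (Hz : is_lim_seq (fun N => C / (INR N + 1)) 0).
{ replace (Finite 0) with (Rbar_mult C 0) by (simpl; f_equal; ring).
  apply is_lim_seq_scal_l.
  replace (Finite 0) with (Rbar_inv p_infty) by reflexivity.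
  apply is_lim_seq_inv; [|discriminate].
  replace p_infty with (Rbar_plus p_infty 1) by reflexivity.
  apply is_lim_seq_plus with (l1 := p_infty) (l2 := 1);
    [apply is_lim_seq_INR | apply is_lim_seq_const | reflexivity]. }
enough (H : is_lim_seq (sum_n (odd_harmonic x)) (PI / 4)) by exact H.
apply (is_lim_seq_le_le (fun N => sum_n (odd_harmonic (PI / 2)) N - C / (INR N + 1)) _
                        (fun N => sum_n (odd_harmonic (PI / 2)) N + C / (INR N + 1))).
- intro N. pose proof (sum_odd_harmonic_dist_PI2 N x Hx) as H.
  replace ((Rabs (x - PI / 2) / sin x ^ 2 + / sin x + 1) / (4 * (INR N + 1))) with (C / (INR N + 1))
    in H by (unfold C; field; pose proof (pos_INR N); lra).
  apply Rabs_le_between in H. lra.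
- replace (PI / 4) with (PI / 4 - 0) by ring.
  exact (is_lim_seq_minus' _ _ _ _ is_lim_seq_odd_harmonic_PI2 Hz).
- replace (PI / 4) with (PI / 4 + 0) by ring.
  exact (is_lim_seq_plus' _ _ _ _ is_lim_seq_odd_harmonic_PI2 Hz).
Qed.

Lemma sgnpow_succ m : sgnpow (Z.succ m) = (- sgnpow m)%Z.
Proof. unfold sgnpow. rewrite Z.even_succ, <- Z.negb_even. now destruct (Z.even m). Qed.

Lemma sgnpow_pred m : sgnpow (Z.pred m) = (- sgnpow m)%Z.
Proof. rewrite <- (Z.succ_pred m) at 2. rewrite sgnpow_succ. lia. Qed.

Lemma sgnpow_add a b : sgnpow (a + b) = (sgnpow a * sgnpow b)%Z.
Proof. unfold sgnpow. rewrite Z.even_add. now destruct (Z.even a), (Z.even b). Qed.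

Lemma sgnpow_add_double a c : sgnpow (a + 2 * c) = sgnpow a.
Proof. unfold sgnpow. rewrite Z.even_add, Z.even_mul. now destruct (Z.even a). Qed.

Lemma sgnpow_of_nat n : IZR (sgnpow (Z.of_nat n)) = (-1) ^ n.
Proof.
induction n as [|n IH]; [reflexivity|].
rewrite Nat2Z.inj_succ, sgnpow_succ, opp_IZR, IH. simpl. ring.
Qed.

Lemma sin_add_IZR_PI x m : sin (x + IZR m * PI) = IZR (sgnpow m) * sin x.
Proof.
induction m as [|m IH|m IH] using Z.peano_ind.
- rewrite Rmult_0_l, Rplus_0_r. change (sgnpow 0) with 1%Z. ring.
- rewrite sgnpow_succ, opp_IZR, succ_IZR.
  replace (x + (IZR m + 1) * PI) with (x + IZR m * PI + PI) by ring.
  rewrite neg_sin, IH. ring.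
- rewrite sgnpow_pred, opp_IZR, <- Z.sub_1_r, minus_IZR,
    <- (Ropp_involutive (sin (x + (IZR m - 1) * PI))), <- neg_sin.
  replace (x + (IZR m - 1) * PI + PI) with (x + IZR m * PI) by ring.
  rewrite IH. ring.
Qed.

Lemma odd_harmonic_add_IZR_PI x q n :
  odd_harmonic (x + IZR q * PI) n = IZR (sgnpow q) * odd_harmonic x n.
Proof.
unfold odd_harmonic.
replace ((2 * INR n + 1) * (x + IZR q * PI))
  with ((2 * INR n + 1) * x + IZR (q + 2 * (Z.of_nat n * q)) * PI)
  by (rewrite plus_IZR, !mult_IZR, <- INR_IZR_INZ; simpl; ring).
rewrite sin_add_IZR_PI, sgnpow_add_double. unfold Rdiv. ring.
Qed.

Lemma is_series_odd_harmonic_frac m k : (0 < k)%Z -> (m mod k <> 0)%Z ->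
  is_series (odd_harmonic (PI * IZR m / IZR k)) (IZR (sgnpow (m / k)) * (PI / 4)).
Proof.
intros Hk Hr. pose proof PI_RGT_0.
assert (Hk' : 0 < IZR k) by (apply IZR_lt; exact Hk).
pose proof (Z.mod_pos_bound m k Hk) as Hrb.
assert (Hr' : 0 < IZR (m mod k) < IZR k) by (split; apply IZR_lt; lia).
replace (PI * IZR m / IZR k) with (PI * IZR (m mod k) / IZR k + IZR (m / k) * PI)
  by (rewrite (Z.div_mod m k) at 3 by lia; rewrite plus_IZR, mult_IZR; field; lra).
apply is_series_ext
  with (a := fun n => IZR (sgnpow (m / k)) * odd_harmonic (PI * IZR (m mod k) / IZR k) n).
{ intro n. symmetry. apply odd_harmonic_add_IZR_PI. }
apply (is_series_scal (IZR (sgnpow (m / k))) _ (PI / 4)), is_series_odd_harmonic. split.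
- apply Rdiv_lt_0_compat; nra.
- apply (Rmult_lt_reg_r (IZR k)); [lra|]. field_simplify; nra.
Qed.

(** * The tangent as an alternating sum of sines *)

Lemma alt_sin_sum_mul_cos K t :
  2 * cos t * sum_n_m (fun j => (-1) ^ S j * sin (2 * INR j * t)) 1 K
  = sin t - (-1) ^ K * sin ((2 * INR K + 1) * t).
Proof.
induction K as [|K IH].
- rewrite sum_n_m_zero by lia. change zero with 0. simpl.
  replace ((2 * 0 + 1) * t) with t by ring. ring.
- rewrite sum_n_Sm by lia. change (plus ?a ?b) with (a + b).
  rewrite Rmult_plus_distr_l, IH, S_INR.
  replace ((2 * INR K + 1) * t) with (2 * (INR K + 1) * t - t) by ring.
  replace ((2 * (INR K + 1) + 1) * t) with (2 * (INR K + 1) * t + t) by ring.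
  rewrite sin_plus, sin_minus. simpl. ring.
Qed.

Lemma tan_eq_alt_sin_sum K t : cos t <> 0 ->
  sin ((2 * INR K + 1) * t) = (-1) ^ S K * sin t ->
  tan t = sum_n_m (fun j => (-1) ^ S j * sin (2 * INR j * t)) 1 K.
Proof.
intros Hc Hs.
apply (Rmult_eq_reg_l (2 * cos t)); [|lra].
rewrite alt_sin_sum_mul_cos, Hs. unfold tan.
replace ((-1) ^ K * ((-1) ^ S K * sin t)) with (- ((-1 * -1) ^ K) * sin t)
  by (rewrite Rpow_mult_distr; simpl; ring).
replace (-1 * -1) with 1 by ring. rewrite pow1. field. exact Hc.
Qed.

Lemma cos_PI_frac_neq_0 m k : (0 < k)%Z -> Z.odd (m + k) = true ->
  cos (PI * IZR m / (2 * IZR k)) <> 0.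
Proof.
intros Hk Ho Hc. destruct (cos_eq_0_0 _ Hc) as [z Hz].
assert (Hk' : 0 < IZR k) by (apply IZR_lt; exact Hk). pose proof PI_RGT_0.
assert (Em : m = (k * (2 * z + 1))%Z).
{ apply eq_IZR. rewrite mult_IZR, plus_IZR, mult_IZR.
  replace (IZR m) with (PI * IZR m / (2 * IZR k) * (2 * IZR k / PI)) by (field; lra).
  rewrite Hz. field. lra. }
subst m. replace (k * (2 * z + 1) + k)%Z with (2 * (k * (z + 1)))%Z in Ho by ring.
now rewrite Z.odd_mul in Ho.
Qed.

Lemma IZR_fold_right_add_seq (f : nat -> Z) s N :
  IZR (fold_right Z.add 0%Z (map f (seq (S s) N)))
  = sum_n_m (fun j => IZR (f j)) (S s) (s + N).
Proof.
revert s. induction N as [|N IH]; intro s.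
- now rewrite sum_n_m_zero by lia.
- cbn [seq map fold_right]. rewrite plus_IZR, IH, (sum_Sn_m _ (S s)) by lia.
  now replace (S s + N)%nat with (s + S N)%nat by lia.
Qed.

(* Coquelicot's lemmas on [sum_n_m] are stated with the abstract [plus], [mult] and
   equality of a monoid; these specializations to [R] can be used for rewriting. *)
Lemma sum_n_m_Rext (u v : nat -> R) lo hi :
  (forall j, (lo <= j <= hi)%nat -> u j = v j) -> sum_n_m u lo hi = sum_n_m v lo hi.
Proof. exact (sum_n_m_ext_loc u v lo hi). Qed.

Lemma sum_n_m_reflect (f : nat -> R) N :
  sum_n_m f 1 N = sum_n_m (fun j => f (S N - j)%nat) 1 N.
Proof.
revert f. induction N as [|N IH]; intro f; [now rewrite !sum_n_m_zero by lia|].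
rewrite sum_Sn_m, <- sum_n_m_S, IH, sum_n_Sm by lia.
change (plus ?a ?b) with (a + b). rewrite Rplus_comm. f_equal.
- apply sum_n_m_Rext. intros j Hj. f_equal. lia.
- f_equal. lia.
Qed.

Lemma sum_n_m_Rplus (u v : nat -> R) lo hi :
  sum_n_m (fun j => u j + v j) lo hi = sum_n_m u lo hi + sum_n_m v lo hi.
Proof. exact (sum_n_m_plus u v lo hi). Qed.

Lemma sum_n_m_Rmult_l (c : R) (u : nat -> R) lo hi :
  sum_n_m (fun j => c * u j) lo hi = c * sum_n_m u lo hi.
Proof. exact (sum_n_m_mult_l c u lo hi). Qed.

Lemma is_series_sum_n_m (u : nat -> nat -> R) (l : nat -> R) lo hi :
  (forall j, (lo <= j <= hi)%nat -> is_series (u j) (l j)) ->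
  is_series (fun n => sum_n_m (fun j => u j n) lo hi) (sum_n_m l lo hi).
Proof.
intro H. destruct (le_lt_dec lo hi) as [Hle|Hlt].
- destruct (Nat.le_exists_sub lo hi Hle) as [d [-> _]]. clear Hle.
  induction d as [|d IH].
  + apply (is_series_ext (u lo)); [intro n; now rewrite sum_n_n|].
    rewrite sum_n_n. apply H. lia.
  + rewrite Nat.add_succ_l, sum_n_Sm by lia.
    apply (is_series_ext (fun n => sum_n_m (fun j => u j n) lo (d + lo) + u (S (d + lo)) n)).
    { intro n. symmetry. exact (sum_n_Sm (fun j => u j n) lo (d + lo) ltac:(lia)). }
    exact (is_series_plus _ _ _ _ (IH (fun j Hj => H j ltac:(lia))) (H (S (d + lo)) ltac:(lia))).
- rewrite sum_n_m_zero by exact Hlt.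
  apply (is_series_ext (fun _ => 0)); [intro n; now rewrite sum_n_m_zero|].
  enough (Hz : is_lim_seq (sum_n (fun _ => 0)) 0) by exact Hz.
  apply (is_lim_seq_ext (fun _ => 0));
    [intro N; rewrite sum_n_const; ring | apply is_lim_seq_const].
Qed.

(** * The sum [B_1(h,k)] *)

Section B1_as_series.

Variables h k : Z.
Hypothesis k_pos : (0 < k)%Z.

Definition B1_floor (j : nat) : Z := (h * Z.of_nat j / k)%Z.
Definition B1_sign (j : nat) : Z := sgnpow (Z.of_nat j + B1_floor j).

Local Notation N := (Z.to_nat k - 1)%nat.

Lemma B1hk_as_sum :
  IZR (B1hk h k) = sum_n_m (fun j => IZR (B1_sign j) * IZR (B1_floor j)) 1 N.
Proof.
unfold B1hk. rewrite (IZR_fold_right_add_seq _ 0).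
apply sum_n_m_Rext. intros j _. now rewrite <- mult_IZR.
Qed.

Hypothesis coprime_hk : Z.gcd h k = 1%Z.

Lemma mul_mod_neq_0 j : (1 <= j)%nat -> (Z.of_nat j < k)%Z -> ((h * Z.of_nat j) mod k <> 0)%Z.
Proof.
intros Hj1 Hjk Hdiv. apply Z.mod_divide in Hdiv; [|lia].
apply Z.gauss in Hdiv; [|now rewrite Z.gcd_comm].
destruct Hdiv as [c Hc]. destruct (Z_le_gt_dec c 0); nia.
Qed.

Lemma B1_floor_reflect j : (1 <= j)%nat -> (Z.of_nat j < k)%Z ->
  B1_floor (Z.to_nat k - j) = (h - 1 - B1_floor j)%Z.
Proof.
intros Hj1 Hjk. unfold B1_floor.
rewrite Nat2Z.inj_sub, Z2Nat.id by lia.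
replace (h * (k - Z.of_nat j))%Z with (h * k + - (h * Z.of_nat j))%Z by ring.
rewrite Z.div_add_l, Z.div_opp_l_nz by (try lia; now apply mul_mod_neq_0).
lia.
Qed.

Hypothesis odd_hk : Z.odd (h + k) = true.

Lemma B1_sign_reflect j : (1 <= j)%nat -> (Z.of_nat j < k)%Z ->
  B1_sign (Z.to_nat k - j) = B1_sign j.
Proof.
intros Hj1 Hjk. unfold B1_sign. rewrite B1_floor_reflect by assumption.
rewrite Nat2Z.inj_sub, Z2Nat.id by lia.
destruct (proj1 (Z.odd_spec _) odd_hk) as [c Hc].
replace (k - Z.of_nat j + (h - 1 - B1_floor j))%Z
  with (Z.of_nat j + B1_floor j + 2 * (c - Z.of_nat j - B1_floor j))%Z by lia.
apply sgnpow_add_double.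
Qed.

(* Adding the sum to its reflection [j -> k - j] leaves [(h - 1) * B1_sign j] termwise. *)
Lemma B1hk_reflect :
  2 * IZR (B1hk h k) = (IZR h - 1) * sum_n_m (fun j => IZR (B1_sign j)) 1 N.
Proof.
rewrite B1hk_as_sum.
set (f := fun j => IZR (B1_sign j) * IZR (B1_floor j)).
replace (2 * sum_n_m f 1 N) with (sum_n_m f 1 N + sum_n_m (fun j => f (S N - j)%nat) 1 N)
  by (rewrite <- sum_n_m_reflect; ring).
rewrite <- sum_n_m_Rplus, <- sum_n_m_Rmult_l.
apply sum_n_m_Rext. intros j Hj. unfold f.
replace (S N - j)%nat with (Z.to_nat k - j)%nat by lia.
rewrite B1_sign_reflect, B1_floor_reflect, !minus_IZR by lia.
ring.
Qed.

Lemma B1_term_as_sum n :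
  B1_term h k n
  = sum_n_m (fun j => (-1) ^ S j * odd_harmonic (PI * IZR (h * Z.of_nat j) / IZR k) n) 1 N.
Proof.
set (m := (h * (2 * Z.of_nat n + 1))%Z).
assert (Hk' : 0 < IZR k) by (apply IZR_lt; exact k_pos).
assert (Hn : 0 < 2 * INR n + 1) by (pose proof (pos_INR n); lra).
assert (Hm : IZR m = IZR h * (2 * INR n + 1))
  by (unfold m; rewrite mult_IZR, plus_IZR, mult_IZR, <- INR_IZR_INZ; reflexivity).
assert (Hth : PI * IZR h * (2 * INR n + 1) / (2 * IZR k) = PI * IZR m / (2 * IZR k))
  by (rewrite Hm; field; lra).
assert (Hsm : (- sgnpow m)%Z = sgnpow k).
{ destruct (proj1 (Z.odd_spec _) odd_hk) as [c Hc].
  replace k with (m + 1 + 2 * (c - h - h * Z.of_nat n))%Z by (unfold m; lia).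
  now rewrite sgnpow_add_double, Z.add_1_r, sgnpow_succ. }
unfold B1_term. rewrite Hth, (tan_eq_alt_sin_sum N).
- unfold Rdiv at 1. rewrite Rmult_comm, <- sum_n_m_Rmult_l. apply sum_n_m_Rext. intros j _.
  unfold odd_harmonic. rewrite Hm, mult_IZR, <- INR_IZR_INZ.
  replace (2 * INR j * (PI * (IZR h * (2 * INR n + 1)) / (2 * IZR k)))
    with ((2 * INR n + 1) * (PI * (IZR h * INR j) / IZR k)) by (field; lra).
  field; lra.
- apply cos_PI_frac_neq_0; [exact k_pos|].
  unfold m. destruct (proj1 (Z.odd_spec _) odd_hk) as [c Hc].
  replace (h * (2 * Z.of_nat n + 1) + k)%Z with (1 + 2 * (c + h * Z.of_nat n))%Z by lia.
  now rewrite Z.odd_add_mul_2.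
- (* [(2k - 1) θ = m π - θ] *)
  replace ((2 * INR N + 1) * (PI * IZR m / (2 * IZR k)))
    with (- (PI * IZR m / (2 * IZR k)) + IZR m * PI).
  2:{ rewrite minus_INR, INR_IZR_INZ, Z2Nat.id by lia. simpl. field. lra. }
  rewrite sin_add_IZR_PI, sin_neg, <- sgnpow_of_nat, Nat.sub_1_r, Nat.succ_pred_pos by lia.
  rewrite Z2Nat.id, <- Hsm, opp_IZR by lia. ring.
Qed.

Lemma is_series_B1_term :
  is_series (B1_term h k) (- (PI / 4) * sum_n_m (fun j => IZR (B1_sign j)) 1 N).
Proof.
apply (is_series_ext _ _ _ (fun n => eq_sym (B1_term_as_sum n))).
replace (- (PI / 4) * sum_n_m (fun j => IZR (B1_sign j)) 1 N)
  with (sum_n_m (fun j => (-1) ^ S j * (IZR (sgnpow (h * Z.of_nat j / k)) * (PI / 4))) 1 N).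
- apply is_series_sum_n_m. intros j Hj.
  apply (is_series_scal ((-1) ^ S j) _ (IZR (sgnpow (h * Z.of_nat j / k)) * (PI / 4))).
  apply is_series_odd_harmonic_frac; [exact k_pos | apply mul_mod_neq_0; lia].
- rewrite <- sum_n_m_Rmult_l. apply sum_n_m_Rext. intros j _.
  unfold B1_sign, B1_floor.
  rewrite sgnpow_add, mult_IZR, sgnpow_of_nat, <- tech_pow_Rmult. ring.
Qed.

End B1_as_series.

Theorem theorem21 (h k : Z) :
  (0 < k)%Z -> Z.gcd h k = 1%Z -> Z.odd (h + k) = true ->
  exists L : R,
    is_series (B1_term h k) L /\
    (IZR (B1hk h k) = 2 * (1 - IZR h) / PI * L)%R.
Proof.
intros Hk Hg Ho.
exists (- (PI / 4) * sum_n_m (fun j => IZR (B1_sign h k j)) 1 (Z.to_nat k - 1)).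
split; [exact (is_series_B1_term h k Hk Hg Ho)|].
pose proof PI_RGT_0.
apply (Rmult_eq_reg_l 2); [|lra].
rewrite (B1hk_reflect h k Hk Hg Ho). field. lra.
Qed.
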